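(* Let $G$ be a connected simple graph with maximum degree at most $3$ and minimum degree at least $2$, in which no two adjacent vertices both have degree $3$. Let $M_1,M_2$ be disjoint matchings of $G$ such that $|M_1\cup M_2|$ is maximum over all pairs of disjoint matchings, and, subject to this, such that $G_{M_1,M_2}$ has the minimum number of connected components. Let $H$ be the graph with vertex set $E(G)\setminus(M_1\cup M_2)$ in which two distinct edges are adjacent if and only if their distance in $G$ is at most $2$. Then $H$ has no odd cycle.
   Context: $G_{M_1,M_2}$ denotes the subgraph of $G$ induced by the edge set $E(G)\setminus(M_1\cup M_2)$. The distance between two edges of $G$ is the distance between the corresponding vertices in the line graph of $G$. *)

From mathcomp Require Import all_boot.
Set Implicit Arguments. Unset Strict Implicit. Unset Printing Implicit Defensive.

(* A simple graph: a symmetric irreflexive relation [adj] on a finite type V.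
   Edges are represented as 2-element vertex sets {x, y}. *)
Section Graphs.
Variables (V : finType) (adj : rel V).

Definition edges : {set {set V}} :=
  [set e : {set V} | [exists x, exists y, adj x y && (e == [set x; y])]].

Definition deg (x : V) : nat := #|[set y | adj x y]|.

Definition connected_graph : Prop := forall x y : V, connect adj x y.

Definition matching (M : {set {set V}}) : Prop :=
  M \subset edges /\
  (forall e f, e \in M -> f \in M -> e != f -> [disjoint e & f]).

Definition esub_verts (F : {set {set V}}) : {set V} := \bigcup_(e in F) e.
Definition esub_adj (F : {set {set V}}) : rel V := fun x y => [set x; y] \in F.

Definition ncomp (F : {set {set V}}) : nat :=
  #|[set [set y | connect (esub_adj F) x y] | x in esub_verts F]|.

(* distance at most 2 in the line graph of G, for edges e f *)
Definition edist_le2 (e f : {set V}) : bool :=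
  ~~ [disjoint e & f] ||
  [exists g in edges, ~~ [disjoint e & g] && ~~ [disjoint g & f]].

Definition Hadj (e f : {set V}) : bool := (e != f) && edist_le2 e f.

End Graphs.

From mathcomp Require Import all_boot zify.
Set Implicit Arguments. Unset Strict Implicit. Unset Printing Implicit Defensive.

(* Colour the edges of M1 and M2 with two colours; all other edges are uncoloured.
   Every vertex meets at most one edge of each colour, so the coloured subgraph consists
   of paths and cycles, and no coloured component contains three ends of paths.  Pairs of
   disjoint matchings of maximum total size are preserved by Kempe swaps along coloured
   components and by moving a colour from an edge onto a suitable uncoloured edge, while
   in such a pair every uncoloured edge sees both colours at its ends.  These moves show
   that of two H-adjacent uncoloured edges one "enters" the other (the entered edge has a
   degree-2 end lying on the other edge or joined to it by a coloured edge), and, using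
   the minimality of the number of components of G_{M1,M2}, that no edge is entered
   twice.  Entering therefore propagates along every walk of H that does not backtrack,
   and five steps of such a walk produce three ends of coloured paths in one coloured
   component.  So H has no cycle of length at least three. *)

Lemma cycle_nth_mod (T : eqType) (r : rel T) (x0 : T) (s : seq T) i :
  cycle r s -> 0 < size s ->
  r (nth x0 s (i %% size s)) (nth x0 s (i.+1 %% size s)).
Proof.
case: s => [|x p] //= /(pathP x0) r_p _.
have : i %% (size p).+1 < (size p).+1 by rewrite ltn_pmod.
rewrite -[i.+1]addn1 -modnDml addn1; move: (i %% _) => j lt_jp.
have := r_p j; rewrite size_rcons => /(_ lt_jp).
rewrite -rcons_cons !nth_rcons /= lt_jp.
case: (ltngtP j (size p)) lt_jp => [lt_jp _|gt_jp lt_jp|-> _].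
- by rewrite modn_small.
- lia.
- by rewrite modnn.
Qed.

Lemma nth_mod_uniq_neq2 (T : eqType) (x0 : T) (s : seq T) i :
  uniq s -> 2 < size s -> nth x0 s (i %% size s) != nth x0 s (i.+2 %% size s).
Proof.
move=> s_uniq s_gt2; have s_gt0 : 0 < size s by apply: leq_trans s_gt2.
rewrite nth_uniq ?ltn_pmod //.
by rewrite -[X in X %% _ == _]addn0 -addn2 eqn_modDl mod0n modn_small.
Qed.

Lemma disjointP (T : finType) (A B : {set T}) :
  reflect (forall x, x \in A -> x \in B -> False) [disjoint A & B].
Proof.
apply: (iffP pred0P) => [AB x xA xB|AB x /=]; first by have := AB x; rewrite /= xA xB.
by apply/negP => /andP [/AB].
Qed.

Lemma not_disjointP (T : finType) (A B : {set T}) :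
  reflect (exists2 x, x \in A & x \in B) (~~ [disjoint A & B]).
Proof.
apply: (iffP idP) => [|[x xA xB]]; last by apply/disjointP => /(_ x xA xB).
rewrite -setI_eq0 => /set0Pn [x]; rewrite inE => /andP [xA xB]; by exists x.
Qed.

Lemma set2C (T : finType) (x y : T) : [set x; y] = [set y; x].
Proof. exact: setUC. Qed.

Lemma setD_exchange (T : finType) (A B : {set T}) (o n : T) :
  o \in A -> o \in B -> n \notin B -> A :\: (n |: (B :\ o)) = o |: (A :\: B :\ n).
Proof.
move=> oA oB nB; apply/setP => x; rewrite !inE.
case: (eqVneq x o) => [->|xo] /=; last by rewrite negb_or andbA.
by rewrite oA andbT orbF; apply: contraNneq nB => <-.
Qed.

Lemma card_imset_eq_kernel (T U W : finType) (A : {set T}) (f : T -> U) (g : T -> W) :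
  {in A &, forall x x', (f x == f x') = (g x == g x')} -> #|f @: A| = #|g @: A|.
Proof.
move=> fg; case: (set_0Vmem A) => [A0|[x0 x0A]].
  by rewrite A0 (imset0 f) (imset0 g) !cards0.
pose h u := if [pick x in A | f x == u] is Some x then g x else g x0.
have hf : {in A, forall x, h (f x) = g x}.
  move=> x xA; rewrite /h; case: pickP => [x' /andP [x'A /eqP fx']|/(_ x)].
    by apply/eqP; rewrite -(fg _ _ x'A xA) fx'.
  by rewrite xA eqxx.
have -> : g @: A = h @: (f @: A).
  by rewrite -imset_comp; apply: eq_in_imset => x xA /=; rewrite hf.
rewrite [RHS]card_in_imset // => _ _ /imsetP [x xA ->] /imsetP [x' x'A ->].
by rewrite !hf // => gxx'; apply/eqP; rewrite fg // gxx'.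
Qed.

Lemma connect_homo (T U : finType) (g : rel T) (g' : rel U) (f : T -> U) :
  (forall a c, g a c -> connect g' (f a) (f c)) ->
  forall a c, connect g a c -> connect g' (f a) (f c).
Proof.
move=> fg a _ /connectP [p g_p ->]; elim: p a g_p => [|b p IHp] a /=.
  by rewrite connect0.
by case/andP=> /fg gab /IHp; apply: connect_trans.
Qed.

Section Pendants.
Variables (T : finType) (g : rel T).
Hypothesis g_sym : symmetric g.
Hypothesis g_deg2 :
  forall x a b c, g x a -> g x b -> g x c -> [\/ a = b, a = c | b = c].

Definition pendant x := exists w, g x w /\ forall w', g x w' -> w' = w.

Lemma pendant_nb x w w' : pendant x -> g x w -> g x w' -> w = w'.
Proof. by case=> t [_ tP] /tP -> /tP ->. Qed.

Lemma last_path_pendant_eq p q u w : g u w ->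
  uniq [:: u, w & p] -> uniq [:: u, w & q] -> path g w p -> path g w q ->
  pendant (last w p) -> pendant (last w q) -> last w p = last w q.
Proof.
elim: p q u w => [|p1 p IHp] [|q1 q] u w guw /= up uq gp gq pend_p pend_q //.
- have /andP [gwq _] := gq; rewrite g_sym in guw.
  by move: uq; rewrite !inE (pendant_nb pend_p guw gwq) eqxx !orbT.
- have /andP [gwp _] := gp; rewrite g_sym in guw.
  by move: up; rewrite !inE (pendant_nb pend_q guw gwp) eqxx !orbT.
case/andP: gp => gwp gp; case/andP: gq => gwq gq.
have pq1 : p1 = q1.
  have gwu : g w u by rewrite g_sym.
  case: (g_deg2 gwu gwp gwq) => // eu.
  - by move: up; rewrite !inE eu eqxx !orbT.
  - by move: uq; rewrite !inE eu eqxx !orbT.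
subst q1; apply: (IHp q w p1 gwp) => //.
- by case/andP: up.
- by case/andP: uq.
Qed.

(* The components of [g] are paths and cycles, and a path has only two ends. *)
Lemma three_pendants_disconnected x y z :
  pendant x -> pendant y -> pendant z -> x != y -> x != z -> y != z ->
  connect g x y -> connect g x z -> False.
Proof.
move=> pend_x pend_y pend_z xy xz yz /connectP [p gp y_p] /connectP [q gq z_q].
subst y z; move: pend_y pend_z xy xz yz.
case: (shortenP gp) => {gp}p gp up _; case: (shortenP gq) => {gq}q gq uq _.
move=> pend_y pend_z xy xz yz.
case: p gp up xy yz pend_y => [|w p] /=; first by rewrite eqxx.
case: q gq uq xz pend_z => [|w' q] /=; first by rewrite eqxx.
move=> /andP [gxw' gq] uq _ pend_z /andP [gxw gp] up _ yz pend_y.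
case: (pend_x) => t [gxt tP]; move: (tP _ gxw) (tP _ gxw') => ? ?; subst w w'.
by move: yz; rewrite (last_path_pendant_eq gxt up uq gp gq pend_y pend_z) eqxx.
Qed.

End Pendants.

Section EdgeInducedComponents.
Variable V : finType.
Implicit Types (R : {set {set V}}).

Definition comp R x := [set t | connect (esub_adj R) x t].

Lemma esub_adj_sym R : symmetric (esub_adj R).
Proof. by move=> x y; rewrite /esub_adj setUC. Qed.

Lemma eq_comp R x x' : (comp R x == comp R x') = connect (esub_adj R) x x'.
Proof.
have R_sym := sym_connect_sym (esub_adj_sym R).
apply/eqP/idP => [Rxx'|Rxx'].
  have : x' \in comp R x' by rewrite inE connect0.
  by rewrite -Rxx' inE.
apply/setP => t; rewrite !inE; apply/idP/idP; last exact: connect_trans.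
by apply: connect_trans; rewrite R_sym.
Qed.

Section MoveIsolatedEdge.
Variables (R : {set {set V}}) (y v q : V).
Hypotheses (yv : y != v) (qv : q != v) (qy : q != y).
Hypothesis yvR : [set y; v] \in R.
Hypothesis R_y : forall e, e \in R -> y \in e -> e = [set y; v].
Hypothesis R_v : forall e, e \in R -> v \in e -> e = [set y; v].
Hypothesis q_vert : q \in esub_verts R.

(* [{y, v}] is a component of the subgraph induced by [R]; moving the edge to [{y, q}]
   hangs [y] on the component of [q].  Components of [R'] and [R] correspond through
   [rho], which collapses [y] onto [q]. *)
Let R' := [set y; q] |: (R :\ [set y; v]).
Let rho x := if x == y then q else x.
Let rho' x := if x == v then y else x.

Lemma esub_adj_moved a c :
  esub_adj R' a c = ([set a; c] == [set y; q]) || ([set a; c] != [set y; v]) && esub_adj R a c.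
Proof. by rewrite /esub_adj in_setU1 in_setD1. Qed.

Lemma rho_homo a c : esub_adj R' a c -> connect (esub_adj R) (rho a) (rho c).
Proof.
have [ac_a ac_c] : a \in [set a; c] /\ c \in [set a; c] by rewrite !inE !eqxx orbT.
rewrite esub_adj_moved => /orP [/eqP ac_yq|/andP [ac_yv Rac]].
  have rho_q z : z \in [set a; c] -> rho z = q.
    by rewrite ac_yq !inE /rho => /orP [] /eqP ->; rewrite ?eqxx // (negbTE qy).
  by rewrite (rho_q _ ac_a) (rho_q _ ac_c) connect0.
have ay : a != y by apply: contraNneq ac_yv => ay; rewrite (R_y Rac) // -ay.
have cy : c != y by apply: contraNneq ac_yv => cy; rewrite (R_y Rac) // -cy.
by rewrite /rho (negbTE ay) (negbTE cy) connect1.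
Qed.

Lemma rho'_homo a c : esub_adj R a c -> connect (esub_adj R') (rho' a) (rho' c).
Proof.
have [ac_a ac_c] : a \in [set a; c] /\ c \in [set a; c] by rewrite !inE !eqxx orbT.
move=> Rac; case: (eqVneq [set a; c] [set y; v]) => [ac_yv|ac_yv].
  have rho'_y z : z \in [set a; c] -> rho' z = y.
    by rewrite ac_yv !inE /rho' => /orP [] /eqP ->; rewrite ?eqxx // (negbTE yv).
  by rewrite (rho'_y _ ac_a) (rho'_y _ ac_c) connect0.
have av : a != v by apply: contraNneq ac_yv => av; rewrite (R_v Rac) // -av.
have cv : c != v by apply: contraNneq ac_yv => cv; rewrite (R_v Rac) // -cv.
by rewrite /rho' (negbTE av) (negbTE cv) connect1 // esub_adj_moved ac_yv Rac orbT.
Qed.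

Lemma v_notin_moved : v \notin esub_verts R'.
Proof.
apply/bigcupP => -[e]; rewrite in_setU1 in_setD1 => /orP [/eqP ->|/andP [e_yv eR] ve].
  by rewrite !inE => /pred2P [vy|vq]; [move: yv|move: qv]; rewrite ?vy ?vq eqxx.
by rewrite (R_v eR ve) eqxx in e_yv.
Qed.

Lemma connect_rho x x' : x \in esub_verts R' -> x' \in esub_verts R' ->
  connect (esub_adj R') x x' = connect (esub_adj R) (rho x) (rho x').
Proof.
have back z : z \in esub_verts R' -> connect (esub_adj R') z (rho' (rho z)).
  move=> zR'; rewrite /rho; case: (eqVneq z y) => [->|zy].
    by rewrite /rho' (negbTE qv) connect1 // esub_adj_moved eqxx.
  have zv : z != v by apply: contraNneq v_notin_moved => <-.
  by rewrite /rho' (negbTE zv) connect0.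
move=> xR' x'R'; apply/idP/idP; first exact: connect_homo rho_homo x x'.
move=> /(connect_homo rho'_homo) Rxx'.
apply: connect_trans (back _ xR') (connect_trans Rxx' _).
by rewrite (sym_connect_sym (esub_adj_sym R')) back.
Qed.

Lemma comp_rho_sub :
  [set comp R (rho x) | x in esub_verts R'] \subset
  [set comp R x | x in esub_verts R] :\ comp R y.
Proof.
have R_yv e z : e \in R -> z \in e -> z \in [set y; v] -> e = [set y; v].
  by move=> eR ze; rewrite !inE => /pred2P [zy|zv]; [apply: R_y|apply: R_v];
     rewrite -?zy -?zv.
have yv_closed : closed (esub_adj R) [set y; v].
  move=> a c Rac; have [ac_a ac_c] : a \in [set a; c] /\ c \in [set a; c].
    by rewrite !inE !eqxx orbT.
  by apply/idP/idP => [/(R_yv _ _ Rac ac_a)|/(R_yv _ _ Rac ac_c)] <-.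
apply/subsetP => _ /imsetP [x xR' ->]; rewrite in_setD1 eq_comp; apply/andP; split.
  rewrite (sym_connect_sym (esub_adj_sym R)).
  apply/negP => /(closed_connect yv_closed); rewrite !inE eqxx /rho => /esym.
  case: (eqVneq x y) => [_|xy] /pred2P [] xv.
  - by move: qy; rewrite xv eqxx.
  - by move: qv; rewrite xv eqxx.
  - by move: xy; rewrite xv eqxx.
  - by move: v_notin_moved; rewrite -xv xR'.
apply/imsetP; exists (rho x) => //; rewrite /rho; case: (eqVneq x y) => // xy.
case/bigcupP: xR' => e; rewrite in_setU1 in_setD1 => /orP [/eqP ->|/andP [_ eR] xe].
  by rewrite !inE (negbTE xy) => /eqP ->.
by apply/bigcupP; exists e.
Qed.

Lemma ncomp_move_isolated_edge : ncomp R' < ncomp R.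
Proof.
have -> : ncomp R' = #|[set comp R (rho x) | x in esub_verts R']|.
  by apply: card_imset_eq_kernel => x x' xR' x'R'; rewrite !eq_comp connect_rho.
apply: leq_ltn_trans (subset_leq_card comp_rho_sub) _.
have -> : ncomp R = #|[set comp R x | x in esub_verts R]| by [].
rewrite [X in _ < X](cardsD1 (comp R y)) imset_f //.
by apply/bigcupP; exists [set y; v]; rewrite ?setU11.
Qed.

End MoveIsolatedEdge.
End EdgeInducedComponents.

Lemma Hadj_sym (V : finType) (adj : rel V) : symmetric (Hadj adj).
Proof.
move=> e f; rewrite /Hadj /edist_le2 eq_sym disjoint_sym; congr (_ && (_ || _)).
by apply/exists_inP/exists_inP => -[g gE /andP [eg gf]]; exists g;
   rewrite // disjoint_sym andbC disjoint_sym ?eg ?gf.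
Qed.

Section Graph.
Variables (V : finType) (adj : rel V).
Hypotheses (adj_sym : symmetric adj) (adj_irr : irreflexive adj).

Local Notation E := (edges adj).

Lemma adj_neq x y : adj x y -> x != y.
Proof. by apply: contraTneq => ->; rewrite adj_irr. Qed.

Lemma edgeP e : reflect (exists x y, adj x y /\ e = [set x; y]) (e \in E).
Proof.
rewrite inE; apply: (iffP existsP) => [[x /existsP [y /andP [xy /eqP ->]]]|[x [y [xy ->]]]].
  by exists x, y.
by exists x; apply/existsP; exists y; rewrite xy eqxx.
Qed.

Lemma edge_at e x : e \in E -> x \in e -> exists y, adj x y /\ e = [set x; y].
Proof.
case/edgeP=> a [b [ab ->]]; rewrite !inE => /pred2P [] ->; first by exists b.
by exists a; rewrite adj_sym set2C.
Qed.

Lemma set2_inj (x a b : V) : [set x; a] = [set x; b] -> x != a -> a = b.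
Proof.
move=> /setP /(_ a); rewrite !inE eqxx orbT => /esym /pred2P [ax|] //.
by rewrite ax eqxx.
Qed.

Lemma edge_adj x y : [set x; y] \in E -> adj x y.
Proof.
move=> xyE; have [z [xz xy_xz]] := edge_at xyE (setU11 x [set y]).
case: (eqVneq x y) => [yx|xy]; last by rewrite (set2_inj xy_xz xy).
have : z \in [set x; y] by rewrite xy_xz !inE eqxx orbT.
by rewrite -yx !inE orbb => /eqP zx; rewrite zx adj_irr in xz.
Qed.

Lemma adj_edge x y : adj x y -> [set x; y] \in E.
Proof. by move=> xy; apply/edgeP; exists x, y. Qed.

Lemma edge_eq e x y : e \in E -> x \in e -> y \in e -> x != y -> e = [set x; y].
Proof.
case/edgeP=> a [b [_ ->]]; rewrite !inE.
by case/pred2P=> -> /pred2P [] -> //; rewrite ?eqxx // => _; apply: set2C.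
Qed.

Lemma deg_ge3 x a b c : adj x a -> adj x b -> adj x c ->
  a != b -> a != c -> b != c -> 3 <= deg adj x.
Proof.
move=> xa xb xc ab ac bc; apply: leq_trans (subset_leq_card (_ : [set a; b; c] \subset _)).
  have -> : [set a; b; c] = c |: [set a; b] by rewrite setUC.
  by rewrite cardsU1 cards2 ab !inE negb_or eq_sym ac eq_sym bc.
by apply/subsetP => z; rewrite !inE => /orP [/pred2P []|/eqP] ->.
Qed.

Lemma deg_ge4 x a b c d : adj x a -> adj x b -> adj x c -> adj x d ->
  a != b -> a != c -> a != d -> b != c -> b != d -> c != d -> 4 <= deg adj x.
Proof.
move=> xa xb xc xd ab ac ad bc bd cd.
apply: leq_trans (subset_leq_card (_ : [set a; b; c; d] \subset _)).
  have -> : [set a; b; c; d] = d |: (c |: [set a; b]) by rewrite setUC (setUC _ [set c]).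
  rewrite cardsU1 cardsU1 cards2 ab.
  by rewrite !inE !negb_or !(eq_sym d) !(eq_sym c) ac ad bc bd eq_sym cd.
by apply/subsetP => z; rewrite !inE => /orP [/orP [/pred2P []|/eqP]|/eqP] ->.
Qed.

Lemma deg_le2_nb x a b c : deg adj x <= 2 -> adj x a -> adj x b -> adj x c ->
  [\/ a = b, a = c | b = c].
Proof.
move=> x_le2 xa xb xc.
case: (eqVneq a b) => [|ab]; first by constructor 1.
case: (eqVneq a c) => [|ac]; first by constructor 2.
case: (eqVneq b c) => [|bc]; first by constructor 3.
by have := deg_ge3 xa xb xc ab ac bc; rewrite leqNgt ltnS x_le2.
Qed.

Lemma deg_le3_nb x a b : deg adj x <= 3 -> adj x a -> adj x b -> a != b ->
  forall c d, adj x c -> adj x d -> c \notin [set a; b] -> d \notin [set a; b] -> c = d.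
Proof.
move=> x_le3 xa xb ab c d xc xd; rewrite !inE !negb_or => /andP [ca cb] /andP [da db].
apply/eqP; apply: contraTT x_le3 => cd; rewrite -ltnNge.
by apply: deg_ge4 xa xb xc xd ab _ _ _ _ cd; rewrite // eq_sym.
Qed.

Lemma deg3_third x a b : deg adj x = 3 -> adj x a -> adj x b -> a != b ->
  exists c, [/\ adj x c, c != a & c != b].
Proof.
move=> x3 xa xb ab.
case: (pickP [pred c | [&& adj x c, c != a & c != b]]) => [c /and3P []|none].
  by exists c.
suff : deg adj x <= 2 by rewrite x3.
apply: leq_trans (subset_leq_card (_ : _ \subset [set a; b])) _.
  apply/subsetP => c; rewrite !inE => xc; have := none c; rewrite /= xc.
  by move/negbT; rewrite /= !negb_and !negbK.
by rewrite cards2 ab.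
Qed.

Lemma matching_eq P e f x : matching adj P -> e \in P -> f \in P -> x \in e -> x \in f -> e = f.
Proof.
case=> _ P_disj eP fP xe xf; apply/eqP; apply: contraT => /(P_disj _ _ eP fP).
by move/disjointP/(_ x xe xf).
Qed.

Lemma matching_set2 P x a b : matching adj P -> [set x; a] \in P -> [set x; b] \in P -> a = b.
Proof.
move=> P_match xaP xbP; apply: set2_inj (matching_eq P_match xaP xbP (setU11 _ _) (setU11 _ _)) _.
by case: P_match => /subsetP/(_ _ xaP)/edge_adj/adj_neq.
Qed.

Section Colouring.
Hypotheses (maxdeg : forall x, deg adj x <= 3) (mindeg : forall x, 2 <= deg adj x).
Hypothesis no33 : forall x y, adj x y -> ~~ ((deg adj x == 3) && (deg adj y == 3)).
Variables M1 M2 : {set {set V}}.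
Hypotheses (hM1 : matching adj M1) (hM2 : matching adj M2) (hdisj : [disjoint M1 & M2]).
Hypothesis hmax : forall N1 N2 : {set {set V}}, matching adj N1 -> matching adj N2 ->
  [disjoint N1 & N2] -> #|N1 :|: N2| <= #|M1 :|: M2|.
Hypothesis hmin : forall N1 N2 : {set {set V}}, matching adj N1 -> matching adj N2 ->
  [disjoint N1 & N2] -> #|N1 :|: N2| = #|M1 :|: M2| ->
  ncomp (edges adj :\: (M1 :|: M2)) <= ncomp (edges adj :\: (N1 :|: N2)).

Lemma deg_2or3 x : (deg adj x = 2) \/ (deg adj x = 3).
Proof. by have := maxdeg x; have := mindeg x; lia. Qed.

Lemma deg3_nb x y : adj x y -> deg adj x = 3 -> deg adj y = 2.
Proof. by move=> xy x3; have := no33 xy; rewrite x3 eqxx; case: (deg_2or3 y) => ->. Qed.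

Definition coloured := M1 :|: M2.
Definition uncoloured := E :\: coloured.
Definition cadj : rel V := fun a c => [set a; c] \in coloured.
Definition Mpair (b : bool) := if b then M1 else M2.

Implicit Types N : bool -> {set {set V}}.

(* By [hmax], no two disjoint matchings have more than [#|coloured|] edges, so a
   [max_pair] [N] is an optimal pair [(N true, N false)]; a [recolouring] is one with
   union [coloured]. *)
Definition max_pair N := [/\ matching adj (N true), matching adj (N false),
  [disjoint N true & N false] & #|N true :|: N false| = #|coloured|].
Definition recolouring N := max_pair N /\ N true :|: N false = coloured.
Definition covers N b x := [exists e in N b, x \in e].

Lemma max_pair_matching N b : max_pair N -> matching adj (N b).
Proof. by case: b => -[]. Qed.

Lemma max_pair_disj N b e : max_pair N -> e \in N b -> e \in N (~~ b) -> False.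
Proof.
by case=> _ _ /disjointP NN _; case: b => /= eN1 eN2; [apply: NN eN1 eN2|apply: NN eN2 eN1].
Qed.

Lemma max_pair_edge N b e : max_pair N -> e \in N b -> e \in E.
Proof. by move=> /(max_pair_matching b) [/subsetP Nb_edges _]; apply: Nb_edges. Qed.

Lemma max_pair_union N b : N b :|: N (~~ b) = N true :|: N false.
Proof. by case: b => //=; rewrite setUC. Qed.

Lemma recolouring_coloured N b e : recolouring N -> e \in N b -> e \in coloured.
Proof. by case=> _ <-; case: b => eN; rewrite inE eN ?orbT. Qed.

Lemma recolouring_colour N e : recolouring N -> e \in coloured -> exists b, e \in N b.
Proof. by case=> _ <- /setUP [] eN; [exists true|exists false]. Qed.

Lemma recolouring_Mpair : recolouring Mpair.
Proof. by []. Qed.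

Lemma coloured_edge e : e \in coloured -> e \in E.
Proof. by case/setUP; [case: hM1|case: hM2] => /subsetP M_edges _; apply: M_edges. Qed.

Lemma cadj_adj x y : cadj x y -> adj x y.
Proof. by move/coloured_edge/edge_adj. Qed.

Lemma cadj_sym : symmetric cadj.
Proof. by move=> x y; rewrite /cadj set2C. Qed.

Lemma cadj_deg2 x a b c : cadj x a -> cadj x b -> cadj x c -> [\/ a = b, a = c | b = c].
Proof.
have eqM1 := matching_set2 hM1; have eqM2 := matching_set2 hM2.
rewrite /cadj /coloured => /setUP [] xa /setUP [] xb /setUP [] xc.
- by constructor 1; apply: eqM1 xa xb.
- by constructor 1; apply: eqM1 xa xb.
- by constructor 2; apply: eqM1 xa xc.
- by constructor 3; apply: eqM2 xb xc.
- by constructor 3; apply: eqM1 xb xc.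
- by constructor 2; apply: eqM2 xa xc.
- by constructor 1; apply: eqM2 xa xb.
- by constructor 1; apply: eqM2 xa xb.
Qed.

Lemma covers_edge N b x : max_pair N -> covers N b x -> exists t, adj x t /\ [set x; t] \in N b.
Proof.
move=> N_max /exists_inP [e eN xe].
by have [t [xt et]] := edge_at (max_pair_edge N_max eN) xe; exists t; rewrite -et.
Qed.

Lemma coversP N b x t : [set x; t] \in N b -> covers N b x.
Proof. by move=> xtN; apply/exists_inP; exists [set x; t]; rewrite ?setU11. Qed.

(* Otherwise [e] could be added to [N b], contradicting the maximality of [M1 :|: M2]. *)
Lemma uncoloured_edge_covered N b e : max_pair N -> e \in E -> e \notin N true :|: N false ->
  exists2 x, x \in e & covers N b x.
Proof.
move=> N_max eE eN.
case: (boolP [exists x in e, covers N b x]) => [/exists_inP [x]|/exists_inPn e_free].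
  by exists x.
have [/subsetP Nb_edges Nb_disj] := max_pair_matching b N_max.
have eNb_match : matching adj (e |: N b).
  split; first by apply/subsetP => f /setU1P [->|/Nb_edges].
  have e_f f : f \in N b -> [disjoint e & f].
    move=> fN; apply/disjointP => x xe xf.
    by have /exists_inPn/(_ f fN) := e_free x xe; rewrite xf.
  move=> f1 f2 /setU1P [->|f1N] /setU1P [->|f2N]; rewrite ?eqxx // => f12.
  - exact: e_f.
  - by rewrite disjoint_sym; apply: e_f.
  - exact: Nb_disj f12.
have eNb_disj : [disjoint e |: N b & N (~~ b)].
  apply/disjointP => f /setU1P [->|fN] fN'; last exact: max_pair_disj N_max fN fN'.
  by move: eN; rewrite -(max_pair_union N b) inE fN' orbT.
have : #|(e |: N b) :|: N (~~ b)| <= #|coloured|.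
  move: eNb_match eNb_disj (max_pair_matching (~~ b) N_max).
  case: b {e_free Nb_edges Nb_disj} => /= match1 disj12 match2; first exact: hmax.
  by rewrite setUC; apply: hmax; rewrite // disjoint_sym.
rewrite -setUA max_pair_union cardsU1 (negbTE eN).
by case: N_max => _ _ _ ->; rewrite ltnn.
Qed.

Definition cclosed (K : {set V}) :=
  forall e x y, e \in coloured -> x \in e -> y \in e -> x \in K -> y \in K.

Definition kempe (K : {set V}) N (b : bool) : {set {set V}} :=
  [set e in N b | ~~ (e \subset K)] :|: [set e in N (~~ b) | e \subset K].

Lemma kempeE K N b e :
  (e \in kempe K N b) = (if e \subset K then e \in N (~~ b) else e \in N b).
Proof. by rewrite !inE; case: (e \subset K); rewrite ?andbT ?andbF ?orbF. Qed.

Section KempeSwap.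
Variables (K : {set V}) (N : bool -> {set {set V}}).
Hypotheses (N_rec : recolouring N) (K_closed : cclosed K).

Lemma cclosed_subset b e x : e \in N b -> x \in e -> (e \subset K) = (x \in K).
Proof.
move=> eN xe; have eC := recolouring_coloured N_rec eN.
apply/idP/idP => [/subsetP/(_ x xe)//|xK].
by apply/subsetP => y ye; apply: K_closed eC xe ye xK.
Qed.

Lemma kempe_colour b e x : e \in kempe K N b -> x \in e ->
  e \in N (if x \in K then ~~ b else b).
Proof.
rewrite kempeE => eN xe; case: ifP eN => eK eN.
  by rewrite (subsetP eK x xe).
by rewrite -(cclosed_subset eN xe) eK.
Qed.

Lemma kempe_covers b x :
  covers (kempe K N) b x = if x \in K then covers N (~~ b) x else covers N b x.
Proof.
apply/exists_inP/idP => [[e eN xe]|].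
  by have := kempe_colour eN xe; case: (x \in K) => eN'; apply/exists_inP; exists e.
by case: ifP => xK /exists_inP [e eN xe]; exists e => //;
   rewrite kempeE (cclosed_subset eN xe) xK.
Qed.

Lemma kempe_recolouring : recolouring (kempe K N).
Proof.
have [[_ _ _ N_card] N_union] := N_rec.
have kempe_union : kempe K N true :|: kempe K N false = N true :|: N false.
  by apply/setP => e; rewrite in_setU !kempeE in_setU /=; case: (e \subset K); rewrite // orbC.
have kempe_match b : matching adj (kempe K N b).
  split.
    apply/subsetP => e; rewrite kempeE; case: (e \subset K);
      exact: max_pair_edge (proj1 N_rec).
  move=> e f eN fN ef; apply/disjointP => x xe xf.
  have := matching_eq (max_pair_matching _ (proj1 N_rec))
    (kempe_colour eN xe) (kempe_colour fN xf) xe xf.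
  by apply/eqP.
split; last by rewrite kempe_union.
split; rewrite ?kempe_union //.
apply/disjointP => e; rewrite !kempeE /=; case: (e \subset K) => eN eN'.
  exact: max_pair_disj (proj1 N_rec) eN' eN.
exact: max_pair_disj (proj1 N_rec) eN eN'.
Qed.

End KempeSwap.

Definition ccomp v := [set t | connect cadj v t].

Lemma ccomp_closed v : cclosed (ccomp v).
Proof.
move=> e x y eC xe ye; rewrite !inE => vx.
case: (eqVneq x y) => [<- //|xy].
apply: connect_trans vx (connect1 _).
by rewrite /cadj -(edge_eq (coloured_edge eC) xe ye xy).
Qed.

Lemma cadj_connect_sym : connect_sym cadj.
Proof. exact: sym_connect_sym cadj_sym. Qed.

Lemma three_cpendants_disconnected x y z :
  pendant cadj x -> pendant cadj y -> pendant cadj z -> x != y -> x != z -> y != z ->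
  connect cadj x y -> connect cadj x z -> False.
Proof. exact: (three_pendants_disconnected cadj_sym cadj_deg2). Qed.

Lemma uncoloured_edge_covers N b u v : recolouring N -> adj u v ->
  [set u; v] \notin coloured -> ~~ covers N b u -> covers N b v.
Proof.
move=> N_rec uv uvC u_free.
have uvN : [set u; v] \notin N true :|: N false by case: N_rec => _ ->.
have [x] := uncoloured_edge_covered b (proj1 N_rec) (adj_edge uv) uvN.
by rewrite !inE => /pred2P [] -> // u_b; rewrite u_b in u_free.
Qed.

Lemma pendant_uncovered N b v w : recolouring N -> pendant cadj v ->
  [set v; w] \in N b -> ~~ covers N (~~ b) v.
Proof.
move=> N_rec v_pend vwN; apply/negP => /(covers_edge (proj1 N_rec)) [t [_ vtN]].
have tw := pendant_nb v_pend (recolouring_coloured N_rec vtN) (recolouring_coloured N_rec vwN).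
by subst t; apply: max_pair_disj (proj1 N_rec) vwN vtN.
Qed.

Lemma pendant_uncovered_colour N x : recolouring N -> pendant cadj x ->
  exists b, ~~ covers N b x.
Proof.
move=> N_rec x_pend; have [w [xw _]] := x_pend.
have [b xwN] := recolouring_colour N_rec xw.
by exists (~~ b); apply: pendant_uncovered xwN.
Qed.

(* Otherwise swapping the colours on the coloured component of [v] would leave the
   uncoloured edge [uv] without colour [b] at either end. *)
Lemma uncovered_connect_pendant N b u v : recolouring N -> adj u v ->
  [set u; v] \notin coloured -> ~~ covers N b u -> pendant cadj v -> connect cadj u v.
Proof.
move=> N_rec uv uvC u_free v_pend; apply: contraT => u_v.
have [w [_ vwN]] := covers_edge (proj1 N_rec) (uncoloured_edge_covers N_rec uv uvC u_free).
have K_rec := kempe_recolouring N_rec (@ccomp_closed v).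
have uK : u \notin ccomp v by rewrite inE cadj_connect_sym.
have swapped := kempe_covers N_rec (@ccomp_closed v).
have u_free' : ~~ covers (kempe (ccomp v) N) b u by rewrite swapped (negbTE uK).
have := uncoloured_edge_covers K_rec uv uvC u_free'.
by rewrite swapped inE connect0 (negbTE (pendant_uncovered N_rec v_pend vwN)).
Qed.

Lemma deg2_pendant x a w : deg adj x = 2 -> adj x a -> [set x; a] \notin coloured ->
  cadj x w -> pendant cadj x.
Proof.
move=> x2 xa xaC xw; exists w; split => // w' xw'.
case: (deg_le2_nb (eq_leq x2) xa (cadj_adj xw) (cadj_adj xw')) => // aw.
- by move: xaC; rewrite aw => /negP[].
- by move: xaC; rewrite aw => /negP[].
Qed.

Lemma uncovered_nb_pendant N b u v : recolouring N -> adj u v ->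
  [set u; v] \notin coloured -> deg adj v = 2 -> ~~ covers N b u -> pendant cadj v.
Proof.
move=> N_rec uv uvC v2 u_free.
have [t [_ vtN]] := covers_edge (proj1 N_rec) (uncoloured_edge_covers N_rec uv uvC u_free).
apply: (@deg2_pendant v u t v2 _ _ (recolouring_coloured N_rec vtN)); first by rewrite adj_sym.
by rewrite set2C.
Qed.

Lemma uncovered_covers_other N b u v : recolouring N -> adj u v ->
  [set u; v] \notin coloured -> ~~ covers N b u -> pendant cadj v -> covers N (~~ b) u.
Proof.
move=> N_rec uv uvC u_free v_pend.
have [w [_ vwN]] := covers_edge (proj1 N_rec) (uncoloured_edge_covers N_rec uv uvC u_free).
apply: uncoloured_edge_covers (pendant_uncovered N_rec v_pend vwN) => //.
  by rewrite adj_sym.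
by rewrite set2C.
Qed.

Lemma uncovered_cadj_eq N b y q : recolouring N -> ~~ covers N b y ->
  [set y; q] \in N (~~ b) -> forall t, cadj y t -> t = q.
Proof.
move=> N_rec y_free yqN t /(recolouring_colour N_rec) [b' ytN].
case: (eqVneq b' b) => [b'b|]; first by rewrite -b'b (coversP ytN) in y_free.
move=> b'b; have b'_nb : b' = ~~ b by move: b'b; case: (b) (b') => [] [].
rewrite b'_nb in ytN; exact: matching_set2 (max_pair_matching _ (proj1 N_rec)) ytN yqN.
Qed.

Lemma deg3_covered N b y v : recolouring N -> deg adj y = 3 -> adj y v ->
  [set y; v] \notin coloured -> covers N b y.
Proof.
move=> N_rec y3 yv yvC; case: (boolP (covers N b y)) => // y_free; exfalso.
have v_pend := uncovered_nb_pendant N_rec yv yvC (deg3_nb yv y3) y_free.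
have [q [yq yqN]] :=
  covers_edge (proj1 N_rec) (uncovered_covers_other N_rec yv yvC y_free v_pend).
have y_q := uncovered_cadj_eq N_rec y_free yqN.
have vq : v != q by apply: contraNneq yvC => ->; apply: recolouring_coloured N_rec yqN.
have [c [yc cv cq]] := deg3_third y3 yv yq vq.
have ycC : [set y; c] \notin coloured by apply: contraNN cq => /y_q ->.
have c_pend := uncovered_nb_pendant N_rec yc ycC (deg3_nb yc y3) y_free.
have y_pend : pendant cadj y.
  by exists q; split; [apply: recolouring_coloured N_rec yqN|].
apply: (three_cpendants_disconnected y_pend v_pend c_pend)
  (uncovered_connect_pendant N_rec yv yvC y_free v_pend)
  (uncovered_connect_pendant N_rec yc ycC y_free c_pend).
- exact: adj_neq yv.
- exact: adj_neq yc.
- by rewrite eq_sym.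
Qed.

Lemma max_pair_of N b : matching adj (N b) -> matching adj (N (~~ b)) ->
  [disjoint N b & N (~~ b)] -> #|N b :|: N (~~ b)| = #|coloured| -> max_pair N.
Proof. by case: b => /= m m' NN' N_card; split; rewrite // 1?disjoint_sym 1?setUC. Qed.

Definition shift N b (o n : {set V}) (c : bool) : {set {set V}} :=
  if c == b then n |: (N b :\ o) else N c.

Lemma shift_b N b o n : shift N b o n b = n |: (N b :\ o).
Proof. by rewrite /shift eqxx. Qed.

Lemma shift_nb N b o n : shift N b o n (~~ b) = N (~~ b).
Proof. by rewrite /shift; case: b. Qed.

Lemma shift_union N b o n : recolouring N -> o \in N b ->
  shift N b o n true :|: shift N b o n false = n |: (coloured :\ o).
Proof.
move=> [N_max N_union] oN; rewrite -(max_pair_union _ b) shift_b shift_nb -N_union.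
rewrite -(max_pair_union N b); apply/setP => e; rewrite !(in_setU, in_setU1, in_setD1).
case: (eqVneq e o) => [->|eo] /=; last by rewrite orbA.
by case: (boolP (o \in N (~~ b))) => [oN'|]; [case: (max_pair_disj N_max oN oN')|rewrite orbF].
Qed.

Lemma deg2_uncoloured_eq x y w : deg adj x = 2 -> adj x y -> [set x; y] \notin coloured ->
  cadj x w -> forall e, e \in uncoloured -> x \in e -> e = [set x; y].
Proof.
move=> x2 xy xyC xw e; rewrite in_setD => /andP [eC eE] xe.
have [t [xt et]] := edge_at eE xe.
case: (deg_le2_nb (eq_leq x2) xy xt (cadj_adj xw)) => [yt|yw|tw].
- by rewrite et yt.
- by move: xyC; rewrite yw => /negP.
- by move: eC; rewrite et tw => /negP.
Qed.

Lemma deg3_uncoloured_eq x y q d : adj x y -> [set x; y] \notin coloured ->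
  cadj x q -> cadj x d -> q != d ->
  forall e, e \in uncoloured -> x \in e -> e = [set x; y].
Proof.
move=> xy xyC xq xd qd e; rewrite in_setD => /andP [eC eE] xe.
have [t [xt et]] := edge_at eE xe.
have qd_C z : [set x; z] \notin coloured -> z \notin [set q; d].
  by move=> xzC; rewrite !inE; apply/pred2P => -[] zE; move: xzC; rewrite zE => /negP.
rewrite et (deg_le3_nb (maxdeg x) (cadj_adj xq) (cadj_adj xd) qd xt xy) ?qd_C //.
by rewrite -et.
Qed.

Section ShiftColour.
Variables (N : bool -> {set {set V}}) (b : bool) (w u w' : V).
Hypotheses (N_rec : recolouring N) (wuN : [set w; u] \in N b).
Hypotheses (ww' : adj w w') (ww'C : [set w; w'] \notin coloured) (w'_free : ~~ covers N b w').

Lemma shift_matching : matching adj ([set w; w'] |: (N b :\ [set w; u])).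
Proof.
have [/subsetP Nb_edges Nb_disj] := max_pair_matching b (proj1 N_rec).
have n_f f : f \in N b -> f != [set w; u] -> [disjoint [set w; w'] & f].
  move=> fN fo; apply/disjointP => x; rewrite !inE => /pred2P [] -> xf.
    have Nb_match := max_pair_matching b (proj1 N_rec).
    by rewrite (matching_eq Nb_match fN wuN xf (setU11 _ _)) eqxx in fo.
  by move: w'_free => /exists_inPn/(_ f fN); rewrite xf.
split.
  by apply/subsetP => e /setU1P [->|/setD1P [_ /Nb_edges]] //; apply: adj_edge.
move=> e f /setU1P [->|/setD1P [eo eN]] /setU1P [->|/setD1P [fo fN]]; rewrite ?eqxx // => ef.
- exact: n_f.
- by rewrite disjoint_sym; apply: n_f.
- exact: Nb_disj.
Qed.

Lemma shift_max_pair : max_pair (shift N b [set w; u] [set w; w']).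
Proof.
have n_N c : [set w; w'] \notin N c.
  by apply: contra ww'C; apply: recolouring_coloured N_rec.
apply: (@max_pair_of _ b); rewrite ?shift_b ?shift_nb.
- exact: shift_matching.
- exact: max_pair_matching (proj1 N_rec).
- apply/disjointP => e /setU1P [->|/setD1P [_ eN]] eN'; first by have := n_N (~~ b); rewrite eN'.
  exact: max_pair_disj (proj1 N_rec) eN eN'.
have := shift_union [set w; w'] N_rec wuN.
rewrite -(max_pair_union _ b) shift_b shift_nb => ->.
rewrite cardsU1 in_setD1 (negbTE ww'C).
by rewrite andbF [in RHS](cardsD1 [set w; u]) (recolouring_coloured N_rec wuN).
Qed.

Lemma shift_mem c e : e \in shift N b [set w; u] [set w; w'] c ->
  e = [set w; w'] \/ e \in N c /\ e != [set w; u].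
Proof.
rewrite /shift; case: (eqVneq c b) => [->|cb]; first by case/setU1P=> [|/setD1P []]; auto.
move=> eN; right; split => //; apply: contraTneq eN => ->.
have -> : c = ~~ b by move: cb; case: (b) (c) => [] [].
by apply/negP => /(max_pair_disj (proj1 N_rec) wuN).
Qed.

(* After the shift, [u] has no coloured edge left and [v] still misses [c], so the
   uncoloured edge [uv] sees no colour [c]. *)
Lemma shift_off_pendant_contra v : (forall t, cadj u t -> t = w) ->
  adj u v -> [set u; v] \notin coloured -> (exists c, ~~ covers N c v) ->
  v != w -> v != w' -> u != w' -> False.
Proof.
move=> u_w uv uvC [c v_free] vw vw' uw'.
have uw : u != w.
  by rewrite eq_sym; apply/adj_neq/edge_adj/(max_pair_edge (proj1 N_rec) wuN).
have x_n x t : x \in [set u; v] -> [set x; t] != [set w; w'].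
  move=> xuv; have : x \notin [set w; w'].
    by move: xuv; rewrite !inE !negb_or => /pred2P [] ->; apply/andP.
  by apply: contraNneq => <-; apply: setU11.
have uvN' : [set u; v] \notin shift N b [set w; u] [set w; w'] true :|:
                               shift N b [set w; u] [set w; w'] false.
  rewrite shift_union // in_setU1 in_setD1 (negbTE uvC) andbF orbF.
  exact: x_n (setU11 _ _).
have [x xuv] := uncoloured_edge_covered c shift_max_pair (adj_edge uv) uvN'.
case/(covers_edge shift_max_pair) => t [_] /shift_mem [xt_n|[xtN xt_o]].
  by move/eqP: xt_n; apply/negP; apply: x_n.
move: xuv xtN xt_o; rewrite !inE => /pred2P [] -> xtN xt_o.
- by rewrite (u_w _ (recolouring_coloured N_rec xtN)) set2C eqxx in xt_o.
- by rewrite (coversP xtN) in v_free.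
Qed.

(* The shift trades the uncoloured edge [w w'], a whole component of the uncoloured
   subgraph, for [w u], which joins the component of [u]. *)
Lemma shift_isolated_edge_contra c : deg adj w = 3 -> pendant cadj w' -> adj u c ->
  [set u; c] \notin coloured -> False.
Proof.
move=> w3 w'_pend uc ucC.
have wuC := recolouring_coloured N_rec wuN.
have wuE := max_pair_edge (proj1 N_rec) wuN.
have [m1 m2 disj12 card12] := shift_max_pair.
have := hmin m1 m2 disj12 card12.
rewrite shift_union // setD_exchange // leqNgt => /negP; apply.
have [d [wd wdN]] := covers_edge (proj1 N_rec) (deg3_covered (~~ b) N_rec w3 ww' ww'C).
have ud : u != d.
  by apply: contraTneq wdN => <-; apply/negP => /(max_pair_disj (proj1 N_rec) wuN).
have [t [w't _]] := w'_pend.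
apply: ncomp_move_isolated_edge.
- exact: adj_neq ww'.
- by apply: contraNneq ww'C => <-.
- by rewrite eq_sym; apply/adj_neq/edge_adj.
- by rewrite in_setD ww'C adj_edge.
- exact: deg3_uncoloured_eq ww' ww'C wuC (recolouring_coloured N_rec wdN) ud.
- move=> e eR w'e; rewrite set2C.
  apply: (deg2_uncoloured_eq (deg3_nb ww' w3) _ _ w't) => //; first by rewrite adj_sym.
  by rewrite set2C.
- by apply/bigcupP; exists [set u; c]; rewrite ?in_setD ?ucC ?adj_edge ?setU11.
Qed.

End ShiftColour.

Lemma uncoloured_edge_at e x : e \in uncoloured -> x \in e ->
  exists t, [/\ adj x t, [set x; t] \notin coloured & e = [set x; t]].
Proof.
rewrite in_setD => /andP [eC eE] xe.
by have [t [xt et]] := edge_at eE xe; exists t; rewrite -et.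
Qed.

Lemma two_uncoloured_nb x a b : adj x a -> adj x b -> a != b ->
  [set x; a] \notin coloured -> [set x; b] \notin coloured ->
  deg adj x = 2 /\ forall t, ~~ cadj x t.
Proof.
move=> xa xb ab xaC xbC; case: (deg_2or3 x) => x_deg.
  split=> // t; apply/negP => xt.
  case: (deg_le2_nb (eq_leq x_deg) xa xb (cadj_adj xt)) => [|ta|tb]; first exact/eqP.
  - by move: xaC; rewrite ta => /negP.
  - by move: xbC; rewrite tb => /negP.
have M_max := proj1 recolouring_Mpair.
have [t1 [xt1 xt1M]] := covers_edge M_max (deg3_covered true recolouring_Mpair x_deg xa xaC).
have [t2 [xt2 xt2M]] := covers_edge M_max (deg3_covered false recolouring_Mpair x_deg xa xaC).
have t12 : t1 != t2 by apply: contraTneq xt2M => <-; apply/negP => /(max_pair_disj M_max xt1M).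
have nC z c t : [set x; z] \notin coloured -> [set x; t] \in Mpair c -> z != t.
  by move=> xzC xtM; apply: contraNneq xzC => ->; apply: recolouring_coloured recolouring_Mpair xtM.
have := deg_ge4 xa xb xt1 xt2 ab (nC _ _ _ xaC xt1M) (nC _ _ _ xaC xt2M)
  (nC _ _ _ xbC xt1M) (nC _ _ _ xbC xt2M) t12.
by rewrite x_deg.
Qed.

Lemma shared_vertex_deg2 x e f : e \in uncoloured -> f \in uncoloured -> e != f ->
  x \in e -> x \in f -> deg adj x = 2 /\ forall t, ~~ cadj x t.
Proof.
move=> eR fR ef xe xf.
have [a [xa xaC ea]] := uncoloured_edge_at eR xe.
have [b [xb xbC fb]] := uncoloured_edge_at fR xf.
by apply: two_uncoloured_nb xa xb _ xaC xbC; apply: contraNneq ef => ab; rewrite ea fb ab.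
Qed.

Lemma no_cadj_nb_deg3 x a : (forall t, ~~ cadj x t) -> adj x a ->
  [set x; a] \notin coloured -> deg adj a = 3.
Proof.
move=> x_free xa xaC.
have M_max := proj1 recolouring_Mpair.
have a_covered c : exists t, adj a t /\ [set a; t] \in Mpair c.
  have [z] := uncoloured_edge_covered c M_max (adj_edge xa) xaC.
  rewrite !inE => /pred2P [] -> /(covers_edge M_max) // [t [_ xtM]].
  by have := x_free t; rewrite /cadj (recolouring_coloured recolouring_Mpair xtM).
have [t1 [a_t1 at1M]] := a_covered true; have [t2 [a_t2 at2M]] := a_covered false.
have t12 : t1 != t2 by apply: contraTneq at2M => <-; apply/negP => /(max_pair_disj M_max at1M).
have x_t c t : [set a; t] \in Mpair c -> x != t.
  move=> atM; apply: contraTneq (x_free a) => ->.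
  by rewrite negbK /cadj set2C (recolouring_coloured recolouring_Mpair atM).
have ax : adj a x by rewrite adj_sym.
have := deg_ge3 ax a_t1 a_t2 (x_t _ _ at1M) (x_t _ _ at2M) t12.
by case: (deg_2or3 a) => ->.
Qed.

Lemma uncoloured_nb_deg2_cadj x y : adj x y -> [set x; y] \notin coloured ->
  deg adj y = 2 -> exists w, cadj x w.
Proof.
move=> xy xyC y2; case: (pickP (cadj x)) => [w xw|x_free]; first by exists w.
by have := no_cadj_nb_deg3 (fun t => negbT (x_free t)) xy xyC; rewrite y2.
Qed.

(* If [x] sees colour [a], swapping the colours on its coloured path, which avoids [u],
   frees [x] from [a]. *)
Lemma kempe_free N a w u x : recolouring N -> [set w; u] \in N a ->
  pendant cadj x -> ~~ connect cadj x u ->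
  exists N', [/\ recolouring N', [set w; u] \in N' a & ~~ covers N' a x].
Proof.
move=> N_rec wuN x_pend x_u.
case: (boolP (covers N a x)) => [x_a|x_free]; last by exists N.
have [t [_ xtN]] := covers_edge (proj1 N_rec) x_a.
exists (kempe (ccomp x) N); split.
- exact: kempe_recolouring N_rec (@ccomp_closed x).
- have u_wu : u \in [set w; u] by rewrite !inE eqxx orbT.
  by rewrite kempeE (cclosed_subset N_rec (@ccomp_closed x) wuN u_wu) inE (negbTE x_u).
- rewrite (kempe_covers N_rec (@ccomp_closed x)) inE connect0.
  exact: pendant_uncovered N_rec x_pend xtN.
Qed.

Lemma pendant_edge_shift_contra N a u v w w' : recolouring N -> [set w; u] \in N a ->
  deg adj w = 3 -> adj w w' -> [set w; w'] \notin coloured ->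
  (forall t, cadj u t -> t = w) -> adj u v -> [set u; v] \notin coloured ->
  pendant cadj v -> connect cadj u v -> v != w -> v != w' -> u != w' -> False.
Proof.
move=> N_rec wuN w3 ww' ww'C u_w uv uvC v_pend u_v vw vw' uw'.
case: (boolP (covers N a w')) => [w'_a|w'_free]; last first.
  apply: (shift_off_pendant_contra N_rec wuN ww' ww'C w'_free u_w uv uvC _ vw vw' uw').
  exact: pendant_uncovered_colour N_rec v_pend.
have [t [_ w'tN]] := covers_edge (proj1 N_rec) w'_a.
have w'_pend : pendant cadj w'.
  apply: (@deg2_pendant w' w t (deg3_nb ww' w3)); first by rewrite adj_sym.
    by rewrite set2C.
  exact: recolouring_coloured N_rec w'tN.
case: (boolP (connect cadj w' u)) => [w'_u|w'_u].
  have u_pend : pendant cadj u.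
    by exists w; split => //; rewrite /cadj set2C (recolouring_coloured N_rec wuN).
  apply: three_cpendants_disconnected w'_pend u_pend v_pend _ _ _ w'_u (connect_trans w'_u u_v).
  - by rewrite eq_sym.
  - by rewrite eq_sym.
  - exact: adj_neq uv.
have [N' [N'_rec wuN' w'_free]] := kempe_free N_rec wuN w'_pend w'_u.
apply: (shift_off_pendant_contra N'_rec wuN' ww' ww'C w'_free u_w uv uvC _ vw vw' uw').
exact: pendant_uncovered_colour N'_rec v_pend.
Qed.

Definition enters (e f : {set V}) : bool :=
  (e != f) && [exists z in f, (deg adj z == 2) && ((z \in e) || [exists w in e, cadj w z])].

Lemma enters_deg2_edge_contra u v e : adj u v -> [set u; v] \notin coloured ->
  deg adj u = 2 -> deg adj v = 2 -> e \in uncoloured -> e != [set u; v] ->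
  (u \in e) || [exists w in e, cadj w u] -> False.
Proof.
move=> uv uvC u2 v2 eR e_uv.
have vu : adj v u by rewrite adj_sym.
have vuC : [set v; u] \notin coloured by rewrite set2C.
have [w0 uw0] := uncoloured_nb_deg2_cadj uv uvC v2.
have [w1 vw1] := uncoloured_nb_deg2_cadj vu vuC u2.
have u_pend := deg2_pendant u2 uv uvC uw0.
have v_pend := deg2_pendant v2 vu vuC vw1.
have uvR : [set u; v] \in uncoloured by rewrite in_setD uvC adj_edge.
case/orP => [ue|/exists_inP [w we wu]].
  by have [_ /(_ w0)] := shared_vertex_deg2 eR uvR e_uv ue (setU11 _ _); rewrite uw0.
have uw : cadj u w by rewrite cadj_sym.
have [b u_free] := pendant_uncovered_colour recolouring_Mpair u_pend.
have u_v := uncovered_connect_pendant recolouring_Mpair uv uvC u_free v_pend.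
have [w' [ww' ww'C ew]] := uncoloured_edge_at eR we.
have u_w t : cadj u t -> t = w by move=> ut; apply: pendant_nb u_pend ut uw.
have uw_neq : u != w := adj_neq (cadj_adj uw).
have vw : v != w by apply: contraNneq uvC => ->.
have w'u : w' != u by apply: contraNneq ww'C => ->.
case: (deg_2or3 w) => w_deg.
  have w_pend := deg2_pendant w_deg ww' ww'C wu.
  exact: three_cpendants_disconnected u_pend v_pend w_pend (adj_neq uv) uw_neq vw u_v (connect1 uw).
have w'v : w' != v.
  apply/eqP => w'v; have ve : v \in e by rewrite ew w'v !inE eqxx orbT.
  by have [_ /(_ w1)] := shared_vertex_deg2 eR uvR e_uv ve (setU1r _ (set11 _)); rewrite vw1.
have [a wuM] := recolouring_colour recolouring_Mpair wu.
apply: (pendant_edge_shift_contra recolouring_Mpair wuM w_deg ww' ww'C u_w uv uvC v_pend u_v vw).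
- by rewrite eq_sym.
- by rewrite eq_sym.
Qed.

Lemma deg2_edge_not_entered u v e : adj u v -> [set u; v] \notin coloured ->
  deg adj u = 2 -> deg adj v = 2 -> e \in uncoloured -> ~~ enters e [set u; v].
Proof.
move=> uv uvC u2 v2 eR; apply/negP => /andP [e_uv /exists_inP [z]].
rewrite !inE => /pred2P [] -> /andP [_].
  exact: enters_deg2_edge_contra uv uvC u2 v2 eR e_uv.
have vu : adj v u by rewrite adj_sym.
have vuC : [set v; u] \notin coloured by rewrite set2C.
by apply: enters_deg2_edge_contra vu vuC v2 u2 eR _; rewrite set2C.
Qed.

Lemma uncoloured_edge_cadj p q : [set p; q] \in uncoloured ->
  exists2 x, x \in [set p; q] & exists t, cadj x t.
Proof.
rewrite in_setD => /andP [pqC pqE].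
have [x xpq /(covers_edge (proj1 recolouring_Mpair)) [t [_ xtM]]] :=
  uncoloured_edge_covered true (proj1 recolouring_Mpair) pqE pqC.
by exists x => //; exists t; apply: recolouring_coloured recolouring_Mpair xtM.
Qed.

Lemma uncoloured_bridge_contra e f p q : e \in uncoloured -> f \in uncoloured ->
  [disjoint e & f] -> p \in e -> q \in f -> [set p; q] \in uncoloured -> False.
Proof.
move=> eR fR ef pe qf gR.
have [x] := uncoloured_edge_cadj gR; rewrite !inE => /pred2P [] -> [t xt].
  have e_g : e != [set p; q].
    by apply: contraTneq qf => e_pq; rewrite (disjointFr ef) // e_pq !inE eqxx orbT.
  have [_ /(_ t)] := shared_vertex_deg2 eR gR e_g pe (setU11 _ _).
  by rewrite xt.
have g_f : [set p; q] != f.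
  by apply: contraTneq pe => g_pq; rewrite (disjointFl ef) // -g_pq !inE eqxx.
have [_ /(_ t)] := shared_vertex_deg2 gR fR g_f (setU1r _ (set11 _)) qf.
by rewrite xt.
Qed.

Lemma Hadj_enters e f : e \in uncoloured -> f \in uncoloured -> Hadj adj e f ->
  enters e f || enters f e.
Proof.
move=> eR fR /andP [ef]; have fe : f != e by rewrite eq_sym.
rewrite /enters ef fe /=.
case: (boolP [disjoint e & f]) => [ef_disj|/not_disjointP [z ze zf]]; last first.
  have [z2 _] := shared_vertex_deg2 eR fR ef ze zf.
  by move=> _; apply/orP; left; apply/exists_inP; exists z; rewrite // z2 eqxx ze.
rewrite /edist_le2 ef_disj => /exists_inP [g gE /andP [/not_disjointP [p pe pg]]].
move=> /not_disjointP [q qg qf].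
have pq : p != q by apply: contraTneq qf => <-; rewrite (disjointFr ef_disj pe).
have gpq := edge_eq gE pg qg pq; subst g; have pq_adj := edge_adj gE.
case: (boolP ([set p; q] \in coloured)) => [pqC|pqC]; last first.
  by case: (uncoloured_bridge_contra eR fR ef_disj pe qf); rewrite in_setD pqC gE.
have := no33 pq_adj; case: (deg_2or3 q) => [q2 _|q3].
  by apply/orP; left; apply/exists_inP; exists q; rewrite // q2 eqxx; apply/orP; right;
     apply/exists_inP; exists p.
case: (deg_2or3 p) => [p2 _|->]; last by rewrite q3.
apply/orP; right; apply/exists_inP; exists p; rewrite // p2 eqxx; apply/orP; right.
by apply/exists_inP; exists q; rewrite // /cadj set2C.
Qed.

Lemma enters_at_same_vertex e e' f z : e \in uncoloured -> e' \in uncoloured ->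
  f \in uncoloured -> e != f -> e' != f -> z \in f -> deg adj z = 2 ->
  (z \in e) || [exists w in e, cadj w z] -> (z \in e') || [exists w in e', cadj w z] ->
  e = e'.
Proof.
move=> eR e'R fR ef e'f zf z2.
have [a [za zaC fa]] := uncoloured_edge_at fR zf.
have z_free h : h \in uncoloured -> h != f -> z \in h -> forall t, ~~ cadj z t.
  by move=> hR hf zh; have [] := shared_vertex_deg2 hR fR hf zh zf.
case/orP=> [ze|/exists_inP [w we wz]] /orP [ze'|/exists_inP [w' we' w'z]].
- have [b [zb zbC eb]] := uncoloured_edge_at eR ze.
  have [b' [zb' zb'C e'b']] := uncoloured_edge_at e'R ze'.
  have ab : a != b by apply: contraNneq ef => ab; rewrite eb fa ab.
  have ab' : a != b' by apply: contraNneq e'f => ab'; rewrite e'b' fa ab'.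
  case: (deg_le2_nb (eq_leq z2) za zb zb') => [ab_eq|ab'_eq|bb'].
  + by rewrite ab_eq eqxx in ab.
  + by rewrite ab'_eq eqxx in ab'.
  + by rewrite eb e'b' bb'.
- by have := z_free e eR ef ze w'; rewrite cadj_sym w'z.
- by have := z_free e' e'R e'f ze' w; rewrite cadj_sym wz.
have ww' : w = w'.
  rewrite cadj_sym in wz; rewrite cadj_sym in w'z.
  have aw : a != w by apply: contraNneq zaC => ->.
  have aw' : a != w' by apply: contraNneq zaC => ->.
  case: (deg_le2_nb (eq_leq z2) za (cadj_adj wz) (cadj_adj w'z)) => [aw_eq|aw'_eq|//].
  + by rewrite aw_eq eqxx in aw.
  + by rewrite aw'_eq eqxx in aw'.
subst w'; apply/eqP; apply: contraT => ee'.
by have [_ /(_ z)] := shared_vertex_deg2 eR e'R ee' we we'; rewrite wz.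
Qed.

Lemma enters_inj e e' f : e \in uncoloured -> e' \in uncoloured -> f \in uncoloured ->
  enters e f -> enters e' f -> e = e'.
Proof.
move=> eR e'R fR ent_ef ent_e'f.
have := fR; rewrite in_setD => /andP [fC fE].
move: (ent_ef) (ent_e'f) => /andP [ef /exists_inP [z zf /andP [/eqP z2 z_e]]].
move=> /andP [e'f /exists_inP [z' z'f /andP [/eqP z'2 z'_e']]].
case: (eqVneq z z') => [zz'|zz']; last first.
  have f_zz' := edge_eq fE zf z'f zz'; rewrite f_zz' in fC fE ent_ef.
  by rewrite (negbTE (deg2_edge_not_entered (edge_adj fE) fC z2 z'2 eR)) in ent_ef.
by subst z'; apply: enters_at_same_vertex eR e'R fR ef e'f zf z2 z_e z'_e'.
Qed.

Lemma enters_propagate e f g : e \in uncoloured -> f \in uncoloured -> g \in uncoloured ->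
  enters e f -> Hadj adj f g -> e != g -> enters f g.
Proof.
move=> eR fR gR ent_ef fg eg; case/orP: (Hadj_enters fR gR fg) => // ent_gf.
by rewrite (enters_inj eR gR fR ent_ef ent_gf) eqxx in eg.
Qed.

Lemma enters_shared_edge e f h z : e \in uncoloured -> f \in uncoloured -> h \in uncoloured ->
  e != f -> z \in e -> z \in f -> enters h e -> h = f.
Proof.
move=> eR fR hR ef ze zf /andP [he /exists_inP [z' z'e /andP [/eqP z'2 z'_h]]].
have [z2 z_free] := shared_vertex_deg2 eR fR ef ze zf.
have [a [za zaC ea]] := uncoloured_edge_at eR ze.
have a3 := no_cadj_nb_deg3 z_free za zaC.
have z'z : z' = z by move: z'e; rewrite ea !inE => /pred2P [|z'a] //; rewrite -z'a z'2 in a3.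
subst z'; case/orP: z'_h => [zh|/exists_inP [w wh wz]]; last first.
  by have := z_free w; rewrite cadj_sym wz.
have [b [zb zbC fb]] := uncoloured_edge_at fR zf.
have [c [zc zcC hc]] := uncoloured_edge_at hR zh.
have ab : a != b by apply: contraNneq ef => ab; rewrite ea fb ab.
case: (deg_le2_nb (eq_leq z2) za zb zc) => [ab_eq|ac|bc].
- by rewrite ab_eq eqxx in ab.
- by rewrite hc ea ac eqxx in he.
- by rewrite hc fb bc.
Qed.

Lemma enters_link e' e f : e' \in uncoloured -> e \in uncoloured -> f \in uncoloured ->
  enters e' e -> enters e f -> e' != f ->
  exists v w, [/\ v \in f, deg adj v = 2, w \in e & cadj w v].
Proof.
move=> e'R eR fR ent_e'e /andP [ef /exists_inP [z zf /andP [/eqP z2 z_e]]] e'f.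
case/orP: z_e => [ze|/exists_inP [w we wz]]; last by exists z, w.
by rewrite (enters_shared_edge eR fR e'R ef ze zf ent_e'e) eqxx in e'f.
Qed.

Lemma uncoloured_deg2_pendant f v w : f \in uncoloured -> v \in f -> deg adj v = 2 ->
  cadj w v -> pendant cadj v.
Proof.
move=> fR vf v2 wv; have [t [vt vtC _]] := uncoloured_edge_at fR vf.
by apply: (@deg2_pendant v t w v2 vt vtC); rewrite cadj_sym.
Qed.

(* If the other end [y] of [f] has degree 3, recolour so that [v] misses the colour of
   [y z']; moving that colour onto [y v] would then reduce the number of components. *)
Lemma link_connect f g v z' w' : f \in uncoloured -> g \in uncoloured ->
  v \in f -> pendant cadj v -> z' \in g -> deg adj z' = 2 -> w' \in f -> cadj w' z' ->
  connect cadj v z'.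
Proof.
move=> fR gR vf v_pend z'g z'2 w'f w'z'.
have [y [vy vyC fy]] := uncoloured_edge_at fR vf.
move: w'f w'z'; rewrite fy !inE => /pred2P [] -> => [/connect1 //|yz'].
have yv : adj y v by rewrite adj_sym.
have yvC : [set y; v] \notin coloured by rewrite set2C.
case: (deg_2or3 y) => y_deg.
  have y_pend := deg2_pendant y_deg yv yvC yz'.
  have [b v_free] := pendant_uncovered_colour recolouring_Mpair v_pend.
  apply: connect_trans (connect1 yz').
  exact: uncovered_connect_pendant recolouring_Mpair vy vyC v_free y_pend.
apply: contraT => v_z'.
have [c [z'c z'cC _]] := uncoloured_edge_at gR z'g.
have [a yz'M] := recolouring_colour recolouring_Mpair yz'.
have [N [N_rec yz'N v_free]] := kempe_free recolouring_Mpair yz'M v_pend v_z'.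
by case: (shift_isolated_edge_contra N_rec yz'N yv yvC v_free y_deg v_pend z'c z'cC).
Qed.

Lemma entering_walk_contra (a : nat -> {set V}) :
  (forall i, i < 5 -> a i \in uncoloured) ->
  (forall i, i < 4 -> Hadj adj (a i) (a i.+1)) ->
  (forall i, i < 3 -> a i != a i.+2) ->
  enters (a 0) (a 1) -> False.
Proof.
move=> aR aH aD e01.
have step i : i < 3 -> enters (a i) (a i.+1) -> enters (a i.+1) (a i.+2).
  move=> lt_i3 ent; apply: (enters_propagate _ _ _ ent); rewrite ?aH ?aD ?aR //; lia.
have e12 := step 0 isT e01; have e23 := step 1 isT e12; have e34 := step 2 isT e23.
(* [a i.-1] enters [a i] through a coloured edge at an end [v_i] of [a i], for i = 2, 3, 4. *)
have [v2 [w1 [v2a2 v2_deg w1a1 w1v2]]] :=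
  enters_link (aR 0 isT) (aR 1 isT) (aR 2 isT) e01 e12 (aD 0 isT).
have [v3 [w2 [v3a3 v3_deg w2a2 w2v3]]] :=
  enters_link (aR 1 isT) (aR 2 isT) (aR 3 isT) e12 e23 (aD 1 isT).
have [v4 [w3 [v4a4 v4_deg w3a3 w3v4]]] :=
  enters_link (aR 2 isT) (aR 3 isT) (aR 4 isT) e23 e34 (aD 2 isT).
have v2_pend := uncoloured_deg2_pendant (aR 2 isT) v2a2 v2_deg w1v2.
have v3_pend := uncoloured_deg2_pendant (aR 3 isT) v3a3 v3_deg w2v3.
have v4_pend := uncoloured_deg2_pendant (aR 4 isT) v4a4 v4_deg w3v4.
have v23 := link_connect (aR 2 isT) (aR 3 isT) v2a2 v2_pend v3a3 v3_deg w2a2 w2v3.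
have v34 := link_connect (aR 3 isT) (aR 4 isT) v3a3 v3_pend v4a4 v4_deg w3a3 w3v4.
have neq i j v v' w : i < 5 -> j < 5 -> a i != a j -> v \in a i -> v' \in a j ->
    cadj w v -> v != v'.
  move=> lt_i5 lt_j5 aij vai v'aj wv; apply/eqP => vv'; subst v'.
  by have [_ /(_ w)] := shared_vertex_deg2 (aR i lt_i5) (aR j lt_j5) aij vai v'aj;
     rewrite cadj_sym wv.
have a23 : a 2 != a 3 by case/andP: e23.
have a34 : a 3 != a 4 by case/andP: e34.
apply: (three_cpendants_disconnected v3_pend v2_pend v4_pend) v34.
- by rewrite eq_sym (neq 2 3 v2 v3 w1 isT isT a23 v2a2 v3a3 w1v2).
- exact: neq 3 4 v3 v4 w2 isT isT a34 v3a3 v4a4 w2v3.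
- exact: neq 2 4 v2 v4 w1 isT isT (aD 2 isT) v2a2 v4a4 w1v2.
- by rewrite cadj_connect_sym.
Qed.

Lemma no_nonbacktracking_walk (a : nat -> {set V}) :
  (forall i, a i \in uncoloured) -> (forall i, Hadj adj (a i) (a i.+1)) ->
  (forall i, a i != a i.+2) -> False.
Proof.
(* Walk forwards from [a 4] or backwards from [a 5], whichever enters the other. *)
move=> aR aH aD; case/orP: (Hadj_enters (aR 4) (aR 5) (aH 4)) => [e45|e54].
  by apply: (@entering_walk_contra (fun i => a (i + 4))) e45 => i _;
     rewrite ?addSn; [apply: aR|apply: aH|apply: aD].
apply: (@entering_walk_contra (fun i => a (5 - i))) e54 => i lt_i.
- exact: aR.
- have -> : 5 - i = (4 - i).+1 by lia.
  have -> : 5 - i.+1 = 4 - i by lia.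
  by rewrite Hadj_sym aH.
- have -> : 5 - i = (3 - i).+2 by lia.
  have -> : 5 - i.+2 = 3 - i by lia.
  by rewrite eq_sym aD.
Qed.

End Colouring.
End Graph.

Theorem lemma5 (V : finType) (adj : rel V)
  (adj_sym : symmetric adj) (adj_irr : irreflexive adj)
  (Gconn : connected_graph adj)
  (maxdeg : forall x, deg adj x <= 3)
  (mindeg : forall x, 2 <= deg adj x)
  (no33 : forall x y, adj x y -> ~~ ((deg adj x == 3) && (deg adj y == 3)))
  (M1 M2 : {set {set V}})
  (hM1 : matching adj M1) (hM2 : matching adj M2)
  (hdisj : [disjoint M1 & M2])
  (hmax : forall N1 N2 : {set {set V}}, matching adj N1 -> matching adj N2 ->
            [disjoint N1 & N2] -> #|N1 :|: N2| <= #|M1 :|: M2|)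
  (hmin : forall N1 N2 : {set {set V}}, matching adj N1 -> matching adj N2 ->
            [disjoint N1 & N2] -> #|N1 :|: N2| = #|M1 :|: M2| ->
            ncomp (edges adj :\: (M1 :|: M2)) <= ncomp (edges adj :\: (N1 :|: N2))) :
  forall s : seq {set V},
    all (fun e => e \in edges adj :\: (M1 :|: M2)) s ->
    uniq s -> cycle (Hadj adj) s -> ~~ odd (size s).
Proof.
move=> s sR s_uniq s_cycle; apply/negP => s_odd.
have s_gt2 : 2 < size s.
  by case: s s_odd s_cycle {sR s_uniq} => [|e [|f [|g s]]] //=; rewrite /Hadj eqxx.
have s_gt0 : 0 < size s by apply: ltnW (ltnW s_gt2).
apply: (@no_nonbacktracking_walk V adj adj_sym adj_irr maxdeg mindeg no33
  M1 M2 hM1 hM2 hdisj hmax hmin (fun i => nth set0 s (i %% size s))) => i.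
- by apply: (allP sR); rewrite mem_nth ?ltn_pmod.
- exact: cycle_nth_mod.
- exact: nth_mod_uniq_neq2.
Qed.
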